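(* Let $p$ be an odd prime, $m$ a positive integer, and let $1,\alpha,\beta\in\mathbb{F}_{p^m}$ be linearly independent over $\mathbb{F}_p$. Let $\eta$ be the quadratic character of $\mathbb{F}_{p^m}$ and $\epsilon_p=e^{2\pi i/p}$. If \[\Big|\sum_{y_1,y_2\in\mathbb{F}_p}\eta(1+y_1\alpha+y_2\beta)\,\epsilon_p^{-y_1y_2}\Big|\neq p,\] then the function $F:\mathbb{F}_{p^m}\times\mathbb{F}_p^2\to\mathbb{F}_p$, \[F(x,y_1,y_2)=\mathrm{Tr}_m(x^2)+\big(y_1+\mathrm{Tr}_m(\alpha x^2)\big)\big(y_2+\mathrm{Tr}_m(\beta x^2)\big),\] is a non-dual-bent function (i.e. $F$ is bent but its dual $F^*$ is not bent).
   Context: $\mathrm{Tr}_m$ is the absolute trace $\mathbb{F}_{p^m}\to\mathbb{F}_p$. Inner product on $\mathbb{F}_{p^m}\times\mathbb{F}_p^2$: $\langle (a,b_1,b_2),(x,y_1,y_2)\rangle=\mathrm{Tr}_m(ax)+b_1y_1+b_2y_2$. Walsh transform of $f:V\to\mathbb{F}_p$ ($\dim V=N$): $\widehat f(b)=\sum_{x\in V}\epsilon_p^{f(x)-\langle b,x\rangle}$; $f$ is bent if $|\widehat f(b)|=p^{N/2}$ for all $b$. For bent $f$ (odd $p$), $\widehat f(b)=\zeta_bp^{N/2}\epsilon_p^{f^*(b)}$ with $\zeta_b\in\{\pm1,\pm i\}$, defining the dual $f^*:V\to\mathbb{F}_p$. A bent function is dual-bent if $f^*$ is bent, and non-dual-bent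 otherwise. *)

From mathcomp Require Import all_boot all_order all_algebra all_field.
Set Implicit Arguments. Unset Strict Implicit. Unset Printing Implicit Defensive.
Import Order.TTheory GRing.Theory Num.Theory.
Local Open Scope ring_scope.

(* epsilon_p = e^{2 pi i / p} in algC: p.-root (-1) is the p-th root of -1
   of minimal non-negative argument, i.e. e^{i pi / p}; its square is e^{2 pi i/p}. *)
Definition eps (p : nat) : algC := (p.-root (-1)) ^+ 2.

Definition epow (p : nat) (a : 'F_p) : algC := eps p ^+ (val a).

Definition toL (L : finFieldType) (p : nat) (a : 'F_p) : L := (val a)%:R.

Definition trL (L : finFieldType) (p m : nat) (x : L) : L :=
  \sum_(i < m) x ^+ (p ^ i).

(* absolute trace as an element of F_p (the trace lies in the prime field) *)
Definition Tr (L : finFieldType) (p m : nat) (x : L) : 'F_p :=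
  odflt 0 [pick k : 'F_p | toL L k == trL p m x].

Definition eta (L : finFieldType) (x : L) : algC :=
  if x == 0 then 0 else if [exists y : L, y ^+ 2 == x] then 1 else -1.

Definition V (L : finFieldType) (p : nat) := (L * ('F_p * 'F_p))%type.

Definition ip (L : finFieldType) (p m : nat) (u v : V L p) : 'F_p :=
  Tr p m (u.1 * v.1) + u.2.1 * v.2.1 + u.2.2 * v.2.2.

Definition walsh (L : finFieldType) (p m : nat) (f : V L p -> 'F_p) (b : V L p) : algC :=
  \sum_(x : V L p) epow (f x - ip m b x).

Definition bent (L : finFieldType) (p m : nat) (f : V L p -> 'F_p) : Prop :=
  forall b : V L p, `|walsh m f b| = sqrtC ((p ^ (m + 2))%:R).

(* dual: W_f(b) = zeta_b p^{N/2} eps^{f*(b)}, zeta_b in {1,-1,i,-i} *)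
Definition dual (L : finFieldType) (p m : nat) (f : V L p -> 'F_p) (b : V L p) : 'F_p :=
  odflt 0 [pick k : 'F_p |
    [exists z : 'I_4, walsh m f b == ('i ^+ z) * sqrtC ((p ^ (m + 2))%:R) * epow k]].

Definition dual_bent (L : finFieldType) (p m : nat) (f : V L p -> 'F_p) : Prop :=
  bent m f /\ bent m (dual m f).

Definition non_dual_bent (L : finFieldType) (p m : nat) (f : V L p -> 'F_p) : Prop :=
  bent m f /\ ~ bent m (dual m f).

From mathcomp Require Import all_boot all_order all_algebra all_field.
From mathcomp Require Import ring cyclic.
Import Order.TTheory GRing.Theory Num.Theory.
Local Open Scope ring_scope.
Set Implicit Arguments. Unset Strict Implicit. Unset Printing Implicit Defensive.

(* In the Walsh coefficient W_F(a, b1, b2), summing first over (y1, y2) and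
   shifting y_i by the traces attached to x collapses the F_p^2 part to
   p * eps^(-b1 b2); what is left is a quadratic Gauss sum over F_{p^m} whose
   leading coefficient c = 1 + b1 alpha + b2 beta is nonzero by independence.
   Completing the square gives W_F(a, b) = p eta(c) G eps^(-b1 b2 + Tr(-a^2/4c))
   with |G| = p^(m/2), so F is bent with dual F*(a, b) = -b1 b2 + Tr(-a^2/4c).
   The same Gauss sum evaluation gives W_F*(0) = eta(-1) G S, where S is the
   twisted sum of eta(c) eps^(-y1 y2); thus F* is bent only if |S| = p. *)

Lemma sum_hom_eq0 (G : finZmodType) (R : idomainType) (chi : G -> R) (x0 : G) :
  {morph chi : x y / x + y >-> x * y} -> chi x0 != 1 -> \sum_x chi x = 0.
Proof.
move=> chiD chi_x0_neq1.
have shift : \sum_x chi x = chi x0 * \sum_x chi x.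
  rewrite {1}(reindex_inj (addIr x0)) /= mulr_sumr.
  by apply: eq_bigr => x _; rewrite chiD mulrC.
apply/eqP; move/eqP: shift; rewrite -subr_eq0 -{1}(mul1r (\sum_x chi x)) -mulrBl.
by rewrite mulf_eq0 subr_eq0 eq_sym (negbTE chi_x0_neq1).
Qed.

Lemma pchar_odd_natr2_neq0 (R : nzRingType) (p : nat) :
  p \in [pchar R] -> odd p -> 2%:R != 0 :> R.
Proof.
move=> pcharRp p_odd; rewrite -(GRing.dvdn_pcharf pcharRp).
rewrite (dvdn_prime2 (GRing.pcharf_prime pcharRp)) //.
by apply: contraTN p_odd => /eqP ->.
Qed.

Lemma Re_unity_root_lt1 (n : nat) (w : algC) :
  (0 < n)%N -> w ^+ n = 1 -> w != 1 -> 'Re w < 1.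
Proof.
move=> n_gt0 wn1 w_neq1.
have norm_w : `|w| = 1.
  by apply/eqP; rewrite -(@pexpr_eq1 _ _ n) ?normr_ge0 -?lt0n // -normrX wn1 normr1.
have /leifP := leif_Re_Creal w; rewrite norm_w; case: ifP => // w_ge0 _.
by move: norm_w; rewrite ger0_norm // => /eqP; rewrite (negbTE w_neq1).
Qed.

Lemma rootN1_neqN1 (n : nat) : (1 < n)%N -> odd n -> n.-root (-1 : algC) != -1.
Proof.
move=> n_gt1 n_odd; have n_gt0 := ltnW n_gt1.
have [w wP] := C_prim_root_exists n_gt0.
have wn1 : w ^+ n = 1 := prim_expr_order wP.
have w_neq1 : w != 1.
  by apply: contraTneq n_gt1 => w1; rewrite -leqNgt dvdn_leq // (prim_order_dvd wP) expr1 w1.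
(* n.-root (-1) maximizes the real part among the roots of -1 in the upper
   half plane; y is such a root with real part > -1 *)
pose y := if 0 <= 'Im (- w) then - w else - w^*.
have yn : y ^+ n = -1.
  rewrite /y; case: ifP => _; rewrite exprNn -signr_odd n_odd expr1 ?wn1 ?mulr1 //.
  by rewrite -rmorphXn wn1 rmorph1 mulr1.
have Im_y_ge0 : 0 <= 'Im y.
  rewrite /y; case: ifP => // /negbT; rewrite !raddfN /= Im_conj opprK oppr_ge0.
  by rewrite -real_ltNge ?Creal_Im ?rpred0 // => /ltW.
have Re_y : 'Re y = - 'Re w by rewrite /y; case: ifP => _; rewrite raddfN /= ?Re_conj.
apply/eqP => rootN1; have := rootC_Re_max n_gt0 yn Im_y_ge0.
rewrite rootN1 Re_y raddfN /= (Creal_ReP 1 _) ?rpred1 // lerN2.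
by rewrite real_leNgt ?rpred1 ?Creal_Re // (Re_unity_root_lt1 n_gt0 wn1 w_neq1).
Qed.

Section AdditiveCharacterFp.
Variable p : nat.
Hypotheses (p_prime : prime p) (p_odd : odd p).

Let p_gt0 : (0 < p)%N. Proof. exact: prime_gt0. Qed.

Lemma eps_expp : eps p ^+ p = 1.
Proof. by rewrite /eps -exprM mulnC exprM rootCK // expr2 mulrNN mulr1. Qed.

Lemma eps_neq1 : eps p != 1.
Proof.
rewrite /eps sqrf_eq1 negb_or rootN1_neqN1 ?prime_gt1 ?andbT //.
apply/eqP => root1; have : p.-root (-1 : algC) ^+ p = -1 := rootCK p_gt0 (-1).
rewrite root1 expr1n => /eqP.
by rewrite -subr_eq0 opprK -(natrD _ 1 1) pnatr_eq0.
Qed.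

Lemma eps_prim : p.-primitive_root (eps p).
Proof.
have [d eps_d d_dvd_p] := prim_order_exists p_gt0 eps_expp.
case/primeP: p_prime => _ /(_ d d_dvd_p) /orP[/eqP d1 | /eqP dp]; first last.
  by rewrite dp in eps_d.
by move: eps_d; rewrite d1 => /prim_expr_order; rewrite expr1 => /eqP; rewrite (negbTE eps_neq1).
Qed.

Lemma Fp_val_lt (a : 'F_p) : (val a < p)%N.
Proof. by have := ltn_ord a; rewrite [in X in (_ < X)%N]Fp_cast. Qed.

Lemma Fp_natr_val (a : 'F_p) : (val a)%:R = a.
Proof. exact: natr_Zp. Qed.

Lemma val_FpD (a b : 'F_p) : val (a + b) = ((val a + val b) %% p)%N.
Proof. by rewrite -val_Fp_nat // natrD !Fp_natr_val. Qed.

Lemma val_FpM (a b : 'F_p) : val (a * b) = ((val a * val b) %% p)%N.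
Proof. by rewrite -val_Fp_nat // natrM !Fp_natr_val. Qed.

Lemma epow0 : epow (0 : 'F_p) = 1.
Proof. by rewrite /epow expr0. Qed.

Lemma epow1 : epow (1 : 'F_p) = eps p.
Proof. by rewrite /epow (_ : val (1 : 'F_p) = 1%N) ?expr1. Qed.

Lemma epowD (a b : 'F_p) : epow (a + b) = epow a * epow b.
Proof. by rewrite /epow val_FpD expr_mod ?eps_expp // exprD. Qed.

Lemma epowMn (a : 'F_p) n : epow (a *+ n) = epow a ^+ n.
Proof. by elim: n => [|n IH]; rewrite ?mulr0n ?epow0 // mulrS epowD IH exprS. Qed.

Lemma epow_neq0 (a : 'F_p) : epow a != 0.
Proof.
apply/negP => /eqP a0; have := epowD a (- a).
by rewrite subrr epow0 a0 mul0r => /eqP; rewrite oner_eq0.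
Qed.

Lemma epowN (a : 'F_p) : epow (- a) = (epow a)^-1.
Proof. by apply: (mulfI (epow_neq0 a)); rewrite -epowD subrr epow0 divff ?epow_neq0. Qed.

Lemma epow_eq1 (a : 'F_p) : epow a = 1 -> a = 0.
Proof.
move=> /eqP; rewrite /epow -(expr0 (eps p)) (eq_prim_root_expr eps_prim) mod0n.
by rewrite modn_small ?Fp_val_lt // => /eqP a0; apply: val_inj.
Qed.

Lemma norm_epow (a : 'F_p) : `|epow a| = 1.
Proof.
rewrite /epow normrX (_ : `|eps p| = 1) ?expr1n //.
by apply/eqP; rewrite -(@pexpr_eq1 _ _ p) ?normr_ge0 // -normrX eps_expp normr1.
Qed.

Lemma conj_epow (a : 'F_p) : (epow a)^* = epow (- a).
Proof.
rewrite epowN; apply: (mulfI (epow_neq0 a)); rewrite divff ?epow_neq0 //.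
by rewrite -normCK norm_epow expr1n.
Qed.

Lemma sum_epow_mul (u : 'F_p) :
  \sum_(k : 'F_p) epow (u * k) = if u == 0 then p%:R else 0.
Proof.
have [-> | u_neq0] := eqVneq u 0.
  by under eq_bigr do rewrite mul0r epow0; rewrite sumr_const card_Fp.
apply: (@sum_hom_eq0 _ _ (fun k => epow (u * k)) u^-1).
  by move=> x y; rewrite mulrDr epowD.
by rewrite divff // epow1 eps_neq1.
Qed.

Lemma sum_epow_bilinear (b1 b2 : 'F_p) :
  \sum_(z1 : 'F_p) \sum_(z2 : 'F_p) epow (z1 * z2 - b1 * z1 - b2 * z2)
  = p%:R * epow (- (b1 * b2)).
Proof.
have shift z1 z2 : (z1 + b2) * (z2 + b1) - b1 * (z1 + b2) - b2 * (z2 + b1)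
   = z1 * z2 + - (b1 * b2) by ring.
rewrite (reindex_inj (addIr b2)) /=.
under eq_bigr => z1 _.
  rewrite (reindex_inj (addIr b1)) /=.
  under eq_bigr => z2 _ do rewrite shift epowD.
  rewrite -mulr_suml sum_epow_mul.
  over.
by rewrite -mulr_suml (bigD1 0) //= big1 ?addr0 // => i /negbTE ->.
Qed.

(* raising to the 4th power kills the unit 'i ^+ z, and 4 is invertible mod p *)
Lemma eq_iexp_epow (k k0 : 'F_p) (z z0 : nat) (S : algC) : S != 0 ->
  'i ^+ z * S * epow k = 'i ^+ z0 * S * epow k0 -> k = k0.
Proof.
move=> S_neq0 eq_kk0.
have i4 n : ('i ^+ n) ^+ 4 = 1 :> algC.
  have i2 : 'i ^+ 2 = -1 :> algC by rewrite expr2 mulCii.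
  by rewrite -exprM mulnC exprM (exprM _ 2 2) i2 sqrrN !expr1n.
have epow4 : epow (k *+ 4) = epow (k0 *+ 4).
  rewrite !epowMn; apply: (mulfI (expf_neq0 4 S_neq0)).
  by have := congr1 (fun x => x ^+ 4) eq_kk0; rewrite !exprMn !i4 !mul1r.
have : epow ((k - k0) *+ 4) = 1 by rewrite mulrnBl epowD epowN epow4 divff ?epow_neq0.
move/epow_eq1/eqP; rewrite -mulr_natr mulf_eq0 => /orP[/eqP/subr0_eq // |].
have two_neq0 := pchar_odd_natr2_neq0 (pchar_Fp p_prime) p_odd.
by rewrite (natrM _ 2 2) mulf_eq0 orbb (negbTE two_neq0).
Qed.

End AdditiveCharacterFp.

Section PrimeFieldTrace.
Variables (p m : nat) (L : finFieldType).
Hypotheses (p_prime : prime p) (m_gt0 : (0 < m)%N) (cardL : #|L| = (p ^ m)%N).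

Let p_gt0 : (0 < p)%N. Proof. exact: prime_gt0. Qed.

Lemma pchar_L : p \in [pchar L].
Proof. exact: card_finPcharP cardL p_prime. Qed.

Lemma toL0 : toL L (0 : 'F_p) = 0.
Proof. by []. Qed.

Lemma toL1 : toL L (1 : 'F_p) = 1.
Proof. by rewrite /toL (_ : val (1 : 'F_p) = 1%N). Qed.

Lemma toLD (a b : 'F_p) : toL L (a + b) = toL L a + toL L b.
Proof. by rewrite /toL val_FpD // GRing.natr_mod_pchar ?pchar_L // natrD. Qed.

Lemma toLM (a b : 'F_p) : toL L (a * b) = toL L a * toL L b.
Proof. by rewrite /toL val_FpM // GRing.natr_mod_pchar ?pchar_L // natrM. Qed.

Lemma toLN (a : 'F_p) : toL L (- a) = - toL L a.
Proof. by apply/eqP; rewrite -addr_eq0 -toLD addNr toL0. Qed.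

Lemma toL_inj : injective (toL L (p := p)).
Proof.
move=> a b eq_ab; apply/eqP; rewrite -subr_eq0; apply/negPn/negP => ab_neq0.
have : toL L ((a - b) * (a - b)^-1) = 0 by rewrite toLM toLD toLN eq_ab subrr mul0r.
by rewrite divff // toL1 => /eqP; rewrite oner_eq0.
Qed.

Lemma toL_frobn (a : 'F_p) n : toL L a ^+ (p ^ n) = toL L a.
Proof.
elim: n => [|n IH]; rewrite ?expr1 // expnSr exprM IH.
by rewrite /toL -(GRing.pFrobenius_autE pchar_L) rmorph_nat.
Qed.

Lemma frobnD (x y : L) n : (x + y) ^+ (p ^ n) = x ^+ (p ^ n) + y ^+ (p ^ n).
Proof.
elim: n => [|n IH]; rewrite ?expr1 // expnSr !exprM IH.
by rewrite -!(GRing.pFrobenius_autE pchar_L) rmorphD.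
Qed.

(* X^p - X has degree p, and already vanishes on the p elements of the prime field *)
Lemma frob_fixed_toL (y : L) : y ^+ p = y -> exists a : 'F_p, toL L a = y.
Proof.
move=> yp; have [a /eqP <- | y_notin] := pickP (fun a : 'F_p => toL L a == y).
  by exists a.
pose P : {poly L} := 'X^p - 'X.
have size_P : size P = p.+1.
  by rewrite /P size_polyDl ?size_polyXn // size_polyN size_polyX ltnS prime_gt1.
have P_neq0 : P != 0 by rewrite -size_poly_eq0 size_P.
have := max_poly_roots P_neq0 (rs := y :: [seq toL L a | a <- enum 'F_p]).
rewrite size_P /= size_map -cardE card_Fp // ltnn => too_many_roots.
suff : false by []; apply: too_many_roots.
  apply/andP; split; first by rewrite /root /P !hornerE yp subrr.
  by apply/allP => _ /mapP[a _ ->]; rewrite /root /P !hornerE (toL_frobn a 1) subrr.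
rewrite map_inj_uniq ?enum_uniq ?andbT; last exact: toL_inj.
by apply/mapP => -[a _ eq_a]; move: (y_notin a); rewrite /= eq_a eqxx.
Qed.

Lemma trLD (x y : L) : trL p m (x + y) = trL p m x + trL p m y.
Proof. by rewrite /trL -big_split; apply: eq_bigr => i _; rewrite frobnD. Qed.

Lemma trLZ (a : 'F_p) (x : L) : trL p m (toL L a * x) = toL L a * trL p m x.
Proof. by rewrite /trL mulr_sumr; apply: eq_bigr => i _; rewrite exprMn toL_frobn. Qed.

Lemma trL_frob (x : L) : trL p m x ^+ p = trL p m x.
Proof.
rewrite /trL -(GRing.pFrobenius_autE pchar_L) rmorph_sum /=.
under eq_bigr do rewrite (GRing.pFrobenius_autE pchar_L) -exprM -expnSr.
case: m m_gt0 cardL => // m' _ cardL'.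
rewrite big_ord_recr big_ord_recl /= -cardL' expf_card expr1 addrC.
by congr (_ + _); apply: eq_bigr => i _; rewrite /bump.
Qed.

Lemma toL_Tr (x : L) : toL L (Tr p m x) = trL p m x.
Proof.
rewrite /Tr; case: pickP => [k /eqP -> // | none].
have [a eq_a] := frob_fixed_toL (trL_frob x).
by move: (none a); rewrite /= eq_a eqxx.
Qed.

Lemma TrD (x y : L) : Tr p m (x + y) = Tr p m x + Tr p m y.
Proof. by apply: toL_inj; rewrite toLD !toL_Tr trLD. Qed.

Lemma TrZ (a : 'F_p) (x : L) : Tr p m (toL L a * x) = a * Tr p m x.
Proof. by apply: toL_inj; rewrite toLM !toL_Tr trLZ. Qed.

Lemma Tr0 : Tr p m (0 : L) = 0.
Proof.
apply: toL_inj; rewrite toL_Tr toL0 /trL big1 // => i _.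
by rewrite expr0n expn_eq0 eqn0Ngt p_gt0.
Qed.

Lemma TrN (x : L) : Tr p m (- x) = - Tr p m x.
Proof. by apply/eqP; rewrite -addr_eq0 -TrD addNr Tr0. Qed.

Definition trace_poly : {poly L} := \sum_(i < m) 'X^(p ^ i).

Lemma horner_trace_poly (x : L) : trace_poly.[x] = trL p m x.
Proof. by rewrite /trace_poly horner_sum; apply: eq_bigr => i _; rewrite hornerXn. Qed.

Lemma trace_poly_neq0 : trace_poly != 0.
Proof.
apply/negP => /eqP /(congr1 (fun q : {poly L} => q`_1)).
rewrite coef_sum coef0 (bigD1 (Ordinal m_gt0)) //= coefXn expn0 eqxx big1 ?addr0.
  by move/eqP; rewrite oner_eq0.
move=> [[|i] lt_i] //= _; rewrite coefXn -{1}(expn0 p) eqn_exp2l ?prime_gt1 //.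
Qed.

Lemma size_trace_poly : (size trace_poly <= (p ^ m.-1).+1)%N.
Proof.
apply: leq_trans (size_sum _ _ _) _; apply/bigmax_leqP => i _.
by rewrite size_polyXn ltnS leq_pexp2l // -ltnS prednK.
Qed.

Lemma Tr_nontrivial : exists x : L, Tr p m x != 0.
Proof.
have [x trx_neq0 | tr0] := pickP (fun x : L => trL p m x != 0).
  by exists x; apply: contraNneq trx_neq0 => trx0; rewrite -toL_Tr trx0.
have := max_poly_roots trace_poly_neq0 (rs := enum L).
rewrite enum_uniq -cardE cardL => /(_ _ isT) /leq_trans /(_ size_trace_poly).
rewrite -(prednK m_gt0) ltnS expnS leqNgt ltn_Pmull ?expn_gt0 ?p_gt0 ?prime_gt1 //.
move=> too_many_roots.
suff : false by []; apply: too_many_roots; apply/allP => x _.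
by rewrite /root horner_trace_poly; move: (tr0 x) => /= /negbFE.
Qed.

End PrimeFieldTrace.

Section QuadraticCharacter.
Variable L : finFieldType.
Hypothesis L_odd : odd #|L|.

Lemma expf_card_pred (x : L) : x != 0 -> x ^+ #|L|.-1 = 1.
Proof.
move=> x_neq0; apply: (mulIf x_neq0).
by rewrite -exprSr prednK ?expf_card ?mul1r // ltnW ?finNzRing_gt1.
Qed.

Lemma card_pred_even : ~~ odd #|L|.-1.
Proof. by move: L_odd (finNzRing_gt1 L); case: #|L| => // n /=; rewrite negbK. Qed.

Lemma exists_gen : exists g : L, (#|L|.-1).-primitive_root g.
Proof.
have q1_gt0 : (0 < #|L|.-1)%N by rewrite -ltnS prednK ?finNzRing_gt1 // ltnW ?finNzRing_gt1.
have : has (#|L|.-1).-primitive_root (enum (predC1 (0 : L))).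
  apply: has_prim_root => //; last by rewrite -cardE cardC1.
    by apply/allP => x; rewrite mem_enum unity_rootE => /expf_card_pred ->.
  exact: enum_uniq.
by case/hasP => g _ gP; exists g.
Qed.

Lemma eta0 : eta (0 : L) = 0.
Proof. by rewrite /eta eqxx. Qed.

Lemma eta_sqr (x : L) : x != 0 -> eta (x ^+ 2) = 1.
Proof.
move=> x_neq0; rewrite /eta sqrf_eq0 (negbTE x_neq0).
by case: existsP => // -[]; exists x.
Qed.

Lemma eta_sign (x : L) : x != 0 -> eta x = 1 \/ eta x = -1.
Proof. by move=> x_neq0; rewrite /eta (negbTE x_neq0); case: existsP; [left | right]. Qed.

Lemma sqr_eta (x : L) : x != 0 -> eta x ^+ 2 = 1.
Proof. by case/eta_sign => ->; rewrite ?sqrrN expr1n. Qed.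

Lemma norm_eta (x : L) : x != 0 -> `|eta x| = 1.
Proof. by case/eta_sign => ->; rewrite ?normrN normr1. Qed.

(* since #|L|.-1 is even, g ^+ k is a square exactly when k is even *)
Lemma eta_expr_gen (g : L) k : (#|L|.-1).-primitive_root g -> eta (g ^+ k) = (-1) ^+ k.
Proof.
move=> gP.
have g_neq0 : g != 0 by rewrite (prim_root_eq0 gP) -lt0n (prim_order_gt0 gP).
rewrite /eta expf_eq0 (negbTE g_neq0) andbF -signr_odd.
case: existsP => [[w /eqP w2] | no_root].
  have w_neq0 : w != 0.
    by apply: contraTneq (expf_neq0 k g_neq0) => w0; rewrite negbK -w2 w0 expr0n.
  have [j w_gj] := prim_rootP gP (expf_card_pred w_neq0).
  move: w2; rewrite w_gj -exprM => /eqP; rewrite (eq_prim_root_expr gP) => /eqP jk.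
  have : odd (val j * 2 %% #|L|.-1) = odd (k %% #|L|.-1) by rewrite jk.
  by rewrite !odd_mod ?(negbTE card_pred_even) // oddM andbF => <-.
case: (boolP (odd k)) => //= k_even; exfalso; apply: no_root.
exists (g ^+ k./2); rewrite -exprM; apply/eqP; congr (g ^+ _).
by rewrite -{2}(odd_double_half k) (negbTE k_even) add0n -muln2.
Qed.

Lemma etaM (x y : L) : eta (x * y) = eta x * eta y.
Proof.
have [-> | x_neq0] := eqVneq x 0; first by rewrite mul0r eta0 mul0r.
have [-> | y_neq0] := eqVneq y 0; first by rewrite mulr0 eta0 mulr0.
have [g gP] := exists_gen.
have [i ->] := prim_rootP gP (expf_card_pred x_neq0).
have [j ->] := prim_rootP gP (expf_card_pred y_neq0).
by rewrite -exprD !eta_expr_gen // exprD.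
Qed.

Lemma etaV (x : L) : eta x^-1 = eta x.
Proof.
have [-> | x_neq0] := eqVneq x 0; first by rewrite invr0.
have -> : x^-1 = x * x^-1 ^+ 2 by rewrite expr2 mulrA divff // mul1r.
by rewrite etaM eta_sqr ?mulr1 ?invr_eq0.
Qed.

Lemma two_neq0 : 2%:R != 0 :> L.
Proof.
have [g gP] := exists_gen.
by apply: (prim_root_dvd_eq0 gP); rewrite dvdn2 card_pred_even.
Qed.

Lemma card_sqrt (t : L) : (#|[pred x : L | x ^+ 2 == t]|%:R : algC) = 1 + eta t.
Proof.
have [-> | t_neq0] := eqVneq t 0.
  rewrite eta0 addr0 (@eq_card _ _ (pred1 0)) ?card1 // => x.
  by rewrite !inE sqrf_eq0.
rewrite /eta (negbTE t_neq0); case: existsP => [[y /eqP y2] | no_root].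
  rewrite (@eq_card _ _ (pred2 y (- y))) => [|x]; last by rewrite !inE -y2 eqf_sqr.
  suff y_neqN : y != - y by rewrite card2 y_neqN -(natrD _ 1 1).
  apply/eqP => y_eqN; have : 2%:R * y == 0 by rewrite mulr2n mulrDl mul1r {1}y_eqN addNr.
  rewrite mulf_eq0 (negbTE two_neq0) /= => /eqP y0.
  by move: t_neq0; rewrite -y2 sqrf_eq0 y0 eqxx.
rewrite eq_card0 ?subrr // => x; rewrite !inE; apply/negP => /eqP x2.
by apply: no_root; exists x; rewrite x2.
Qed.

Lemma sum_sqr (f : L -> algC) : \sum_(x : L) f (x ^+ 2) = \sum_(t : L) (1 + eta t) * f t.
Proof.
rewrite (partition_big (fun x : L => x ^+ 2) xpredT) //; apply: eq_bigr => t _.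
rewrite (eq_bigr (fun _ => f t)) => [|x /eqP -> //].
by rewrite sumr_const -card_sqrt mulr_natl.
Qed.

End QuadraticCharacter.

Lemma expr4_eq1_iexp (z : algC) : z ^+ 4 = 1 -> exists k : 'I_4, z = 'i ^+ k.
Proof.
have i2 : 'i ^+ 2 = -1 :> algC by rewrite expr2 mulCii.
move=> /eqP; rewrite (exprM _ 2 2) sqrf_eq1 => /orP[|/eqP z2].
  rewrite sqrf_eq1 => /orP[] /eqP ->.
    by exists (Ordinal (isT : (0 < 4)%N)); rewrite expr0.
  by exists (Ordinal (isT : (2 < 4)%N)); rewrite i2.
have zE : z = - (z * 'i) * 'i by rewrite mulNr -mulrA mulCii mulrN1 opprK.
have : (z * 'i) ^+ 2 == 1 by rewrite exprMn z2 i2 mulrNN mulr1.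
rewrite sqrf_eq1 => /orP[] /eqP ziE; rewrite zE ziE.
  by exists (Ordinal (isT : (3 < 4)%N)); rewrite mulN1r exprS i2 mulrN1.
by exists (Ordinal (isT : (1 < 4)%N)); rewrite opprK mul1r expr1.
Qed.

Section GaussSum.
Variables (p m : nat) (L : finFieldType).
Hypotheses (p_prime : prime p) (p_odd : odd p) (m_gt0 : (0 < m)%N).
Hypothesis cardL : #|L| = (p ^ m)%N.

Lemma odd_cardL : odd #|L|.
Proof. by rewrite cardL oddX p_odd orbT. Qed.

Definition psi (x : L) : algC := epow (Tr p m x).

Lemma psiD (x y : L) : psi (x + y) = psi x * psi y.
Proof. by rewrite /psi TrD // epowD. Qed.

Lemma psi0 : psi 0 = 1.
Proof. by rewrite /psi Tr0 // epow0. Qed.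

Lemma conj_psi (x : L) : (psi x)^* = psi (- x).
Proof. by rewrite /psi conj_epow // TrN. Qed.

Lemma sum_psi_mul (c : L) : \sum_(x : L) psi (c * x) = if c == 0 then #|L|%:R else 0.
Proof.
have [-> | c_neq0] := eqVneq c 0.
  by under eq_bigr do rewrite mul0r psi0; rewrite sumr_const.
have [x1 Tr_x1] := Tr_nontrivial p_prime m_gt0 cardL.
apply: (@sum_hom_eq0 _ _ (fun x => psi (c * x)) (c^-1 * x1)).
  by move=> x y; rewrite mulrDr psiD.
by rewrite mulrA divff // mul1r /psi; apply: contra_neq Tr_x1 => /epow_eq1; apply.
Qed.

Definition gauss : algC := \sum_(x : L) psi (x ^+ 2).

Lemma sum_psi_sqr_eta (c : L) :
  \sum_(x : L) psi (c * x ^+ 2) = \sum_(t : L) eta t * psi (c * t) + (c == 0)%:R * #|L|%:R.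
Proof.
rewrite (sum_sqr odd_cardL (fun t => psi (c * t))).
under eq_bigr do rewrite mulrDl mul1r.
by rewrite big_split /= sum_psi_mul addrC; case: eqP; rewrite ?mul1r ?mul0r.
Qed.

Lemma sum_psi_scale_sqr (c : L) : c != 0 -> \sum_(x : L) psi (c * x ^+ 2) = eta c * gauss.
Proof.
move=> c_neq0; have etaE (d : L) : d != 0 ->
    \sum_(x : L) psi (d * x ^+ 2) = \sum_(t : L) eta t * psi (d * t).
  by move=> d_neq0; rewrite sum_psi_sqr_eta (negbTE d_neq0) mul0r addr0.
have gaussE : gauss = \sum_t eta t * psi (1 * t).
  by rewrite -etaE ?oner_neq0 //; apply: eq_bigr => x _; rewrite mul1r.
rewrite etaE // (reindex_inj (mulfI (invr_neq0 c_neq0))) /= gaussE mulr_sumr.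
apply: eq_bigr => t _.
rewrite (etaM odd_cardL) (etaV odd_cardL) -mulrA mul1r; congr (_ * (_ * psi _)).
exact: mulVKf.
Qed.

Lemma sum_psi_quad (c a : L) : c != 0 ->
  \sum_(x : L) psi (c * x ^+ 2 - a * x) = eta c * psi (- (a ^+ 2 / (4%:R * c))) * gauss.
Proof.
move=> c_neq0; have two_neq0 := two_neq0 odd_cardL.
pose d := a / (2%:R * c).
have complete_square x : c * (x + d) ^+ 2 - a * (x + d) = c * x ^+ 2 + - (a ^+ 2 / (4%:R * c)).
  rewrite /d; field; rewrite c_neq0 two_neq0 andbT /=.
  by rewrite (_ : 4%:R = 2%:R * 2%:R :> L) ?mulf_neq0 // -natrM.
rewrite (reindex_inj (addIr d)) /=.
under eq_bigr do rewrite complete_square psiD.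
by rewrite -mulr_suml sum_psi_scale_sqr // mulrAC.
Qed.

Lemma conj_gauss : gauss^* = eta (-1 : L) * gauss.
Proof.
rewrite /gauss rmorph_sum /= -sum_psi_scale_sqr ?oppr_eq0 ?oner_neq0 //.
by apply: eq_bigr => x _; rewrite conj_psi mulN1r.
Qed.

Lemma gauss_mul_conj : gauss * gauss^* = #|L|%:R.
Proof.
have two_neq0 := two_neq0 odd_cardL.
have expand (x y : L) : (x + y) ^+ 2 + - y ^+ 2 = x ^+ 2 + (2%:R * x) * y by ring.
have -> : gauss * gauss^* = \sum_(y : L) \sum_(x : L) psi (x ^+ 2) * psi ((2%:R * x) * y).
  rewrite {2}/gauss rmorph_sum /= mulr_sumr; apply: eq_bigr => y _.
  rewrite /gauss mulr_suml (reindex_inj (addIr y)) /=; apply: eq_bigr => x _.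
  by rewrite conj_psi -psiD expand psiD.
rewrite exchange_big /=; under eq_bigr do rewrite -mulr_sumr sum_psi_mul.
rewrite (bigD1 0) //= mulr0 eqxx expr0n /= psi0 mul1r big1 ?addr0 // => x x_neq0.
by rewrite mulf_eq0 (negbTE two_neq0) (negbTE x_neq0) mulr0.
Qed.

Lemma sqr_gauss : gauss ^+ 2 = eta (-1 : L) * #|L|%:R.
Proof.
have sqr_etaN1 : eta (-1 : L) ^+ 2 = 1 by rewrite sqr_eta // oppr_eq0 oner_neq0.
by rewrite -gauss_mul_conj conj_gauss -[LHS]mul1r -sqr_etaN1; ring.
Qed.

Lemma norm_gauss : `|gauss| = sqrtC #|L|%:R.
Proof. by rewrite -[LHS]sqrCK ?normr_ge0 // normCK gauss_mul_conj. Qed.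

Lemma natr_cardL_neq0 : (#|L|%:R : algC) != 0.
Proof. by rewrite pnatr_eq0 -lt0n cardL expn_gt0 prime_gt0. Qed.

Lemma sqrtC_cardL_neq0 : sqrtC (#|L|%:R : algC) != 0.
Proof. by rewrite sqrtC_eq0 natr_cardL_neq0. Qed.

Lemma eta_gauss_iexp (c : L) : c != 0 ->
  exists k : 'I_4, eta c * gauss = 'i ^+ k * sqrtC #|L|%:R.
Proof.
move=> c_neq0; pose u := eta c * gauss / sqrtC #|L|%:R.
have [k uE] : exists k : 'I_4, u = 'i ^+ k.
  apply: expr4_eq1_iexp; rewrite (exprM _ 2 2) /u !exprMn sqr_eta // mul1r sqr_gauss.
  by rewrite exprVn sqrtCK mulfK ?natr_cardL_neq0 // -expr2 sqr_eta // oppr_eq0 oner_neq0.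
by exists k; rewrite -uE /u divfK ?sqrtC_cardL_neq0.
Qed.

End GaussSum.

Lemma big_V (L : finFieldType) (p : nat) (h : V L p -> algC) :
  \sum_(v : V L p) h v = \sum_(x : L) \sum_(y1 : 'F_p) \sum_(y2 : 'F_p) h (x, (y1, y2)).
Proof.
symmetry; rewrite (eq_bigr (fun x => \sum_(q : 'F_p * 'F_p) h (x, q))) => [|x _].
  by rewrite pair_bigA; apply: eq_bigr => -[].
by rewrite pair_bigA; apply: eq_bigr => -[].
Qed.

Section QuadraticBentFunction.
Variables (p m : nat) (L : finFieldType) (alpha beta : L).
Hypotheses (p_prime : prime p) (p_odd : odd p) (m_gt0 : (0 < m)%N).
Hypothesis cardL : #|L| = (p ^ m)%N.
Hypothesis indep : forall a b c : 'F_p,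
  toL L a * 1 + toL L b * alpha + toL L c * beta = 0 -> [/\ a = 0, b = 0 & c = 0].

Definition Fquad (v : V L p) : 'F_p :=
  Tr p m (v.1 ^+ 2) + (v.2.1 + Tr p m (alpha * v.1 ^+ 2)) * (v.2.2 + Tr p m (beta * v.1 ^+ 2)).

Definition quad_coef (b1 b2 : 'F_p) : L := 1 + toL L b1 * alpha + toL L b2 * beta.

Lemma quad_coef_neq0 (b1 b2 : 'F_p) : quad_coef b1 b2 != 0.
Proof.
apply/eqP => coef0; have [] := indep (a := 1) (b := b1) (c := b2).
  by rewrite toL1 mulr1.
by move/eqP; rewrite oner_eq0.
Qed.

Definition dual_arg (a : L) (b1 b2 : 'F_p) : L := - (a ^+ 2 / (4%:R * quad_coef b1 b2)).

Lemma Fquad_sub_ip (a x : L) (b1 b2 y1 y2 : 'F_p) :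
  let z1 := y1 + Tr p m (alpha * x ^+ 2) in let z2 := y2 + Tr p m (beta * x ^+ 2) in
  Fquad (x, (y1, y2)) - ip m (a, (b1, b2)) (x, (y1, y2))
  = (z1 * z2 - b1 * z1 - b2 * z2) + Tr p m (quad_coef b1 b2 * x ^+ 2 - a * x).
Proof.
move=> z1 z2; have -> : quad_coef b1 b2 * x ^+ 2 - a * x =
    x ^+ 2 + toL L b1 * (alpha * x ^+ 2) + toL L b2 * (beta * x ^+ 2) + - (a * x).
  by rewrite /quad_coef; ring.
rewrite !TrD // TrN // !TrZ // /Fquad /ip /= /z1 /z2.
ring.
Qed.

Lemma walsh_Fquad (a : L) (b1 b2 : 'F_p) : walsh m Fquad (a, (b1, b2)) =
  p%:R * (eta (quad_coef b1 b2) * gauss p m L) * epow (- (b1 * b2) + Tr p m (dual_arg a b1 b2)).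
Proof.
have inner (A B : 'F_p) : \sum_(y1 : 'F_p) \sum_(y2 : 'F_p)
    epow ((y1 + A) * (y2 + B) - b1 * (y1 + A) - b2 * (y2 + B)) = p%:R * epow (- (b1 * b2)).
  rewrite -(sum_epow_bilinear p_prime p_odd); symmetry; rewrite (reindex_inj (addIr A)) /=.
  by apply: eq_bigr => y1 _; rewrite (reindex_inj (addIr B)).
rewrite /walsh big_V.
under eq_bigr => x _.
  under eq_bigr => y1 _ do under eq_bigr => y2 _ do rewrite Fquad_sub_ip epowD //.
  under eq_bigr do rewrite -mulr_suml.
  rewrite -mulr_suml inner.
  over.
rewrite -mulr_sumr (sum_psi_quad p_prime p_odd m_gt0 cardL) ?quad_coef_neq0 //.
by rewrite epowD // /psi /dual_arg; ring.
Qed.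

Lemma sqrtC_cardV : sqrtC ((p ^ (m + 2))%:R : algC) = p%:R * sqrtC #|L|%:R.
Proof. by rewrite expnD natrM -cardL sqrtCM ?rpred_nat // natrX sqrCK ?ler0n // mulrC. Qed.

Lemma walsh_Fquad_iexp (a : L) (b1 b2 : 'F_p) : exists k : 'I_4, walsh m Fquad (a, (b1, b2)) =
  'i ^+ k * sqrtC ((p ^ (m + 2))%:R) * epow (- (b1 * b2) + Tr p m (dual_arg a b1 b2)).
Proof.
have [k gaussE] := eta_gauss_iexp p_prime p_odd m_gt0 cardL (quad_coef_neq0 b1 b2).
by exists k; rewrite walsh_Fquad gaussE sqrtC_cardV; congr (_ * _); ring.
Qed.

Lemma bent_Fquad : bent m Fquad.
Proof.
move=> [a [b1 b2]]; have [k ->] := walsh_Fquad_iexp a b1 b2.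
rewrite !normrM (norm_epow p_prime) normrX normCi expr1n mul1r mulr1.
by rewrite ger0_norm // sqrtC_ge0 ler0n.
Qed.

Lemma dual_Fquad (a : L) (b1 b2 : 'F_p) :
  dual m Fquad (a, (b1, b2)) = - (b1 * b2) + Tr p m (dual_arg a b1 b2).
Proof.
have [k0 walshE] := walsh_Fquad_iexp a b1 b2.
have sqrtC_neq0 : sqrtC ((p ^ (m + 2))%:R : algC) != 0.
  by rewrite sqrtC_eq0 pnatr_eq0 expn_eq0 negb_and -lt0n prime_gt0.
rewrite /dual; case: pickP => [k /existsP [z /eqP eq_k] | none] /=.
  by rewrite walshE in eq_k; symmetry; exact: eq_iexp_epow p_prime p_odd _ _ _ _ _ sqrtC_neq0 eq_k.
by have /existsP [] := none (- (b1 * b2) + Tr p m (dual_arg a b1 b2)); exists k0; rewrite walshE.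
Qed.

Definition twisted_eta_sum : algC :=
  \sum_(y1 : 'F_p) \sum_(y2 : 'F_p) eta (quad_coef y1 y2) * epow (- (y1 * y2)).

Lemma walsh_dual_Fquad0 :
  walsh m (dual m Fquad) 0 = eta (-1 : L) * gauss p m L * twisted_eta_sum.
Proof.
have odd_L := odd_cardL p_odd cardL.
have four_neq0 : (4%:R : L) != 0.
  by rewrite (_ : 4%:R = 2%:R * 2%:R :> L) ?mulf_neq0 ?two_neq0 // -natrM.
have etaE y1 y2 : eta (- (4%:R * quad_coef y1 y2)^-1) = eta (-1 : L) * eta (quad_coef y1 y2).
  rewrite -[X in eta X = _]mulN1r (etaM odd_L) (etaV odd_L) (etaM odd_L).
  rewrite (_ : 4%:R = 2%:R ^+ 2 :> L).
    by rewrite eta_sqr ?two_neq0 // mul1r.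
  by rewrite -natrX.
have dual_argE x y1 y2 : dual_arg x y1 y2 = - (4%:R * quad_coef y1 y2)^-1 * x ^+ 2.
  by rewrite /dual_arg mulNr mulrC.
rewrite /walsh big_V.
under eq_bigr => x _ do under eq_bigr => y1 _ do under eq_bigr => y2 _ do
  rewrite /ip /= !mul0r Tr0 // !addr0 subr0 dual_Fquad epowD //.
rewrite exchange_big /= mulr_sumr; apply: eq_bigr => y1 _.
rewrite exchange_big /= mulr_sumr; apply: eq_bigr => y2 _.
under eq_bigr do rewrite dual_argE -/(psi p m _).
rewrite -mulr_sumr (sum_psi_scale_sqr p_prime p_odd m_gt0 cardL).
  by rewrite etaE; ring.
by rewrite oppr_eq0 invr_eq0 mulf_neq0 ?quad_coef_neq0.
Qed.

Lemma not_bent_dual_Fquad : `|twisted_eta_sum| != p%:R -> ~ bent m (dual m Fquad).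
Proof.
move=> sum_neq_p /(_ 0); rewrite walsh_dual_Fquad0 !normrM.
rewrite norm_eta ?oppr_eq0 ?oner_neq0 // mul1r norm_gauss // sqrtC_cardV mulrC.
by move/(mulIf (sqrtC_cardL_neq0 p_prime cardL)) => eq_p; rewrite eq_p eqxx in sum_neq_p.
Qed.

End QuadraticBentFunction.

Theorem corollary2 (p m : nat) (L : finFieldType)
  (alpha beta : L)
  (p_prime : prime p) (p_odd : odd p) (m_pos : (0 < m)%N)
  (cardL : #|L| = (p ^ m)%N)
  (indep : forall a b c : 'F_p,
      toL L a * 1 + toL L b * alpha + toL L c * beta = 0 ->
      [/\ a = 0, b = 0 & c = 0])
  (hS : `| \sum_(y1 : 'F_p) \sum_(y2 : 'F_p)
            eta (1 + toL L y1 * alpha + toL L y2 * beta) * epow (- (y1 * y2)) |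
        != (p%:R : algC)) :
  non_dual_bent m
    (fun v : V L p =>
       Tr p m (v.1 ^+ 2) + (v.2.1 + Tr p m (alpha * v.1 ^+ 2)) * (v.2.2 + Tr p m (beta * v.1 ^+ 2))).
Proof.
split; first exact: bent_Fquad.
exact: not_bent_dual_Fquad.
Qed.
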